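(* Let $r,s\in\mathbb C^\times$ with $r^j=s$ for some integer $j\ge0$, and let $C\in\mathbb C^\times$. Let $f(x,y)=\sum_{i=0}^b g_i(x)y^i\in\mathbb C[x,y]$ be a polynomial of degree $(a,b)$ such that $\deg g_i<o(r)$ for $0\le i\le b$. If $f(rx,\ sCx^j+sy)=r^as^bf(x,y)$, then $f(x,y)$ is a constant multiple of $x^a$.
   Context: The monomial $x^iy^k$ has degree $(i,k)$; degrees are ordered by $(i,k)>(i',k')$ iff $k>k'$, or $k=k'$ and $i>i'$; the degree of a nonzero polynomial is the largest degree of its monomials (so $b$ is the $y$-degree and $a=\deg g_b$). $o(r)$ is the multiplicative order of $r$ ($\infty$ if $r$ is not a root of unity). *)

From HB Require Import structures.
From mathcomp Require Import all_boot all_order all_algebra.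
Set Implicit Arguments. Unset Strict Implicit. Unset Printing Implicit Defensive.
Import Order.TTheory GRing.Theory Num.Theory.
Local Open Scope ring_scope.

(* Bivariate polynomials f(x,y) = \sum_i g_i(x) y^i are represented as
   f : {poly {poly R}}: the outer variable is y, the coefficients f`_i = g_i
   are polynomials in x. *)

Definition subst_rsC (R : fieldType) (r s C : R) (j : nat)
  (f : {poly {poly R}}) : {poly {poly R}} :=
  (map_poly (fun g : {poly R} => g \Po (r *: 'X)) f)
    \Po (((s * C) *: 'X^j)%:P + s%:P *: 'X).

(* y-degree of f (meaningful for f != 0) *)
Definition ydeg (R : fieldType) (f : {poly {poly R}}) : nat := (size f).-1.
Definition xdeg_lead (R : fieldType) (f : {poly {poly R}}) : nat :=
  (size (lead_coef f)).-1.

(* deg g < o(r), where o(r) is the multiplicative order of r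
   (infinite if r is not a root of unity, in which case the condition is vacuous). *)
Definition deg_lt_order (R : fieldType) (r : R) (g : {poly R}) : Prop :=
  forall n : nat, (0 < n)%N -> n.-primitive_root r -> ((size g).-1 < n)%N.

From HB Require Import structures.
From mathcomp Require Import all_boot all_order all_algebra.
Set Implicit Arguments. Unset Strict Implicit. Unset Printing Implicit Defensive.
Import Order.TTheory GRing.Theory Num.Theory.
Local Open Scope ring_scope.

(* Write f = \sum_i g_i y^i and q = s C x^j + s y.  The substitution is
   \sum_i g_i(r x) q^i, and q^i has y-degree i with leading coefficient s^i.
   Comparing y^b-coefficients gives g_b(r x) = r^a g_b(x), so every monomial
   x^k of g_b with k < a satisfies r^(a-k) = 1, which the bound a < o(r)
   forbids: g_b = c x^a.  If b > 0, the y^(b-1)-coefficients at x^(a+j)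
   compare r^(a+j) s^(b-1) = r^a s^b times the same coefficient of g_(b-1),
   and are left with b s^b C r^a c = 0, impossible in characteristic 0. *)

Lemma coef_comp_scaleX (A : comNzRingType) (r : A) (g : {poly A}) k :
  (g \Po (r *: 'X))`_k = r ^+ k * g`_k.
Proof.
elim/poly_ind: g k => [|p c IH] k; first by rewrite comp_poly0 !coef0 mulr0.
rewrite comp_poly_MXaddC -scalerAr !coefD coefZ !coefC !coefMX.
case: k => [|k] /=; first by rewrite mulr0 add0r expr0 mul1r.
by rewrite IH !addr0 mulrA -exprS.
Qed.

Section CompLinear.
Variables (A : comNzRingType) (S d : A).
Let q := d%:P + S *: 'X.

Lemma coef_linear_pow_gt n k : (n < k)%N -> (q ^+ n)`_k = 0.
Proof.
elim: n k => [|n IH] k hk; first by rewrite expr0 coefC; case: k hk.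
rewrite exprSr mulrDr coefD coefMC -scalerAr coefZ coefMX IH ?(ltnW hk) //.
by case: k hk => // k hk /=; rewrite IH // mulr0 mul0r add0r.
Qed.

Lemma coef_linear_pow_diag n : (q ^+ n)`_n = S ^+ n.
Proof.
elim: n => [|n IH]; first by rewrite !expr0 coefC.
rewrite exprSr mulrDr coefD coefMC -scalerAr coefZ coefMX /= IH.
by rewrite coef_linear_pow_gt // mul0r add0r mulrC exprSr.
Qed.

Lemma coef_linear_pow_subdiag n : (q ^+ n.+1)`_n = (S ^+ n * d) *+ n.+1.
Proof.
elim: n => [|n IH].
  by rewrite expr1 coefD coefC coefZ coefX /= mulr0 addr0 expr0 mul1r.
rewrite exprSr mulrDr coefD coefMC -scalerAr coefZ coefMX /= IH.
by rewrite coef_linear_pow_diag mulrnAr mulrA -exprS [in RHS]mulrS.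
Qed.

Lemma coef_comp_linear_top (p : {poly A}) n :
  (size p <= n.+1)%N -> (p \Po q)`_n = p`_n * S ^+ n.
Proof.
move=> szp; rewrite coef_comp_poly.
rewrite (big_ord_widen n.+1 (fun i => p`_i * (q ^+ i)`_n)) //.
rewrite big_mkcond big_ord_recr /= big1 => [|i _]; last first.
  by rewrite coef_linear_pow_gt // mulr0 if_same.
rewrite add0r coef_linear_pow_diag; case: ltnP => // szn.
by rewrite nth_default // mul0r.
Qed.

Lemma coef_comp_linear_subtop (p : {poly A}) n : (size p <= n.+2)%N ->
  (p \Po q)`_n = p`_n * S ^+ n + p`_n.+1 * (S ^+ n * d) *+ n.+1.
Proof.
move=> szp; rewrite coef_comp_poly.
rewrite (big_ord_widen n.+2 (fun i => p`_i * (q ^+ i)`_n)) //.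
rewrite big_mkcond !big_ord_recr /= big1 => [|i _]; last first.
  by rewrite coef_linear_pow_gt // mulr0 if_same.
rewrite add0r coef_linear_pow_diag coef_linear_pow_subdiag !mulrnAr.
congr (_ + _); case: ltnP => // szn; rewrite nth_default ?mul0r ?mul0rn //.
Qed.

End CompLinear.

Lemma comp_scaleX_eigen_monomial (F : fieldType) (r : F) (g : {poly F}) :
  r != 0 -> deg_lt_order r g -> g \Po (r *: 'X) = r ^+ (size g).-1 *: g ->
  g = lead_coef g *: 'X^((size g).-1).
Proof.
move=> r0 hord hg; set a := (size g).-1.
apply/polyP => k; rewrite coefZ coefXn.
case: (ltngtP k a) => [ltka|ltak|->] /=; last 2 first.
- by rewrite mulr0 nth_default // (leq_trans (leqSpred _) ltak).
- by rewrite mulr1 lead_coefE.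
rewrite mulr0; apply/eqP; apply: contraT => gk0.
have := congr1 (fun p : {poly F} => p`_k) hg.
rewrite /= coef_comp_scaleX coefZ => /(mulIf gk0); rewrite -/a => rka.
have r_ak : r ^+ (a - k) = 1.
  by apply: (mulfI (expf_neq0 k r0)); rewrite -exprD subnKC ?(ltnW ltka) // mulr1.
have ak0 : (0 < a - k)%N by rewrite subn_gt0.
have [m pm dm] := prim_order_exists ak0 r_ak.
have := leq_trans (hord m (prim_order_gt0 pm) pm) (dvdn_leq ak0 dm).
by rewrite ltnNge leq_subr.
Qed.

Section Substitution.
Variables (F : fieldType) (r s C : F) (j : nat).

Lemma coef_subst_rsC_top (f : {poly {poly F}}) :
  (subst_rsC r s C j f)`_(ydeg f)
    = (lead_coef f \Po (r *: 'X)) * (s ^+ ydeg f)%:P.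
Proof.
rewrite /subst_rsC coef_comp_linear_top ?rmorphXn ?coef_map_id0 ?comp_poly0 //.
by rewrite (leq_trans (size_poly _ _)) // leqSpred.
Qed.

Lemma coef_subst_rsC_subtop (f : {poly {poly F}}) n : size f = n.+2 ->
  (subst_rsC r s C j f)`_n = (f`_n \Po (r *: 'X)) * (s ^+ n)%:P
    + (lead_coef f \Po (r *: 'X)) * ((s ^+ n)%:P * ((s * C) *: 'X^j)) *+ n.+1.
Proof.
move=> szf; rewrite /subst_rsC coef_comp_linear_subtop ?rmorphXn.
  by rewrite !coef_map_id0 ?comp_poly0 // lead_coefE szf.
by rewrite -szf size_poly.
Qed.

Hypotheses (F0 : [pchar F] =i pred0) (r0 : r != 0) (s0 : s != 0) (C0 : C != 0).
Hypothesis rjs : r ^+ j = s.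

Variables (f : {poly {poly F}}) (a : nat).
Hypothesis subst_f : subst_rsC r s C j f = ((r ^+ a * s ^+ ydeg f)%:P)%:P * f.

Lemma subst_rsC_eigen_lead : lead_coef f \Po (r *: 'X) = r ^+ a *: lead_coef f.
Proof.
have sb0 : (s ^+ ydeg f)%:P != 0 :> {poly F} by rewrite polyC_eq0 expf_neq0.
have := coef_subst_rsC_top f; rewrite subst_f coefCM.
by rewrite polyCM mulrAC mul_polyC => /esym/mulIf -/(_ sb0).
Qed.

Lemma subst_rsC_eigen_polyC c : lead_coef f = c *: 'X^a -> f = (lead_coef f)%:P.
Proof.
move=> gX; case szf: (size f) => [|[|n]].
- by move/eqP: szf; rewrite size_poly_eq0 => /eqP ->; rewrite lead_coef0.
- by rewrite [LHS]size1_polyC ?szf // lead_coefE szf.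
have lf0 : lead_coef f != 0 by rewrite lead_coef_eq0 -size_poly_eq0 szf.
have c0 : c != 0 by apply: contraNneq lf0 => c0; rewrite gX c0 scale0r.
move: subst_f; rewrite /ydeg szf /= => subst_fn.
have := congr1 (fun p : {poly F} => p`_(a + j)) (coef_subst_rsC_subtop szf).
rewrite subst_fn /= coefCM coefD coefMC coefMn coef_comp_scaleX gX comp_polyZ.
rewrite mul_polyC scalerA -scalerAr !coefZ coefMXn ltnNge leq_addl /= addnK.
rewrite coefCM coefZ coef_comp_scaleX coefXn eqxx mulr1 [_ * s ^+ n]mulrAC.
have -> : r ^+ (a + j) * s ^+ n = r ^+ a * s ^+ n.+1.
  by rewrite exprD rjs exprS mulrA.
rewrite -[X in X = _]addr0 => /addrI/esym/eqP.
rewrite -mulr_natr !mulf_eq0 !expf_eq0 (pcharf0P _).1 //.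
by rewrite (negbTE r0) (negbTE s0) (negbTE C0) (negbTE c0) !andbF.
Qed.

End Substitution.

Theorem mainTheorem17 (R : numClosedFieldType) (r s C : R) (j a b : nat)
  (f : {poly {poly R}}) :
  r != 0 -> s != 0 -> C != 0 -> r ^+ j = s ->
  f != 0 -> b = ydeg f -> a = xdeg_lead f ->
  (forall i : nat, (i <= b)%N -> deg_lt_order r f`_i) ->
  subst_rsC r s C j f = ((r ^+ a * s ^+ b)%:P)%:P * f ->
  exists c : R, f = (c *: 'X^a)%:P.
Proof.
move=> r0 s0 C0 rjs _ hb ha hdeg; rewrite hb => subst_f.
have dega : (size (lead_coef f)).-1 = a by rewrite ha.
have ordg : deg_lt_order r (lead_coef f).
  by rewrite lead_coefE; apply: hdeg; rewrite hb.
have gX : lead_coef f = lead_coef (lead_coef f) *: 'X^a.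
  rewrite -dega; apply: comp_scaleX_eigen_monomial r0 ordg _.
  by rewrite dega (subst_rsC_eigen_lead s0 subst_f).
exists (lead_coef (lead_coef f)).
by rewrite -gX -(subst_rsC_eigen_polyC (pchar_num R) r0 s0 C0 rjs subst_f gX).
Qed.
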